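(* Let $n\ge 1$ and $N>n$ be integers, let $\lambda>0$, $\beta\in(0,1)$, and let $\tilde b_0\neq 0$ be a real number. Let $\hat\Sigma\in\mathbb{R}^{(n+1)\times(n+1)}$ be a symmetric positive definite Toeplitz matrix, $[\hat\Sigma]_{ts}=\hat r_{|t-s|}$ for $t,s=1,\dots,n+1$. Let $K_{TC}\in\mathbb{R}^{(n+1)\times(n+1)}$ be the matrix with entries $[K_{TC}]_{ts}=\beta^{\max(t,s)}-\beta^{n+2}$ for $t,s=1,\dots,n+1$, let $v=[1,0,\dots,0]^T\in\mathbb{R}^{n+1}$, and define $$\hat{\mathbf b}_{ML}=[\hat b_0,\hat b_1,\dots,\hat b_n]^T=\tilde b_0^{-1}\left(\hat\Sigma+((N-n)\lambda K_{TC})^{-1}\right)^{-1}v .$$ If the polynomial $\hat b_{ML}(z)=\sum_{k=0}^n \hat b_k z^{-k}$ is not identically zero, then all its zeros lie strictly inside the unit circle, i.e. every (complex) root $\breve z$ of $\hat b_0 z^n+\hat b_1 z^{n-1}+\dots+\hat b_n$ satisfies $|\breve z|<1$.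
   Context: This is the regularized (kernel-based) maximum entropy estimate of the coefficients of a high-order AR model $b(z)y_t=e_t$ with a Gaussian prior $\mathbf b\sim\mathcal N(0,\lambda K_{TC})$ (''tuned-correlated kernel''). In the paper, $\hat r_k=\frac1N\sum_{t=1}^{N-k}y_ty_{t+k}$ are sample covariance lags of data $y_1,\dots,y_N$ and $\tilde b_0$ is a preliminary estimate of $b_0$; for the claim only the stated properties of $\hat\Sigma$ and $\tilde b_0$ are needed. *)

From HB Require Import structures.
From mathcomp Require Import all_boot all_order all_algebra.
From mathcomp Require Import complex.
Set Implicit Arguments. Unset Strict Implicit. Unset Printing Implicit Defensive.
Import Order.TTheory GRing.Theory Num.Theory.
Local Open Scope ring_scope.

(* Indices are 0-based: entry (i,j) of an (n+1)x(n+1) matrix corresponds to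
   the paper's (t,s) = (i+1, j+1). *)

Definition K_TC (R : ringType) (n : nat) (beta : R) : 'M[R]_(n.+1) :=
  \matrix_(i < n.+1, j < n.+1) (beta ^+ (maxn i j).+1 - beta ^+ n.+2).

Definition e1 (R : ringType) (n : nat) : 'cV[R]_(n.+1) :=
  \col_(i < n.+1) (if i == ord0 then 1 else 0).

Definition toeplitz_sym (R : ringType) (n : nat) (S : 'M[R]_(n.+1)) :=
  exists r : nat -> R, forall i j : 'I_(n.+1), S i j = r `|(i : nat) - (j : nat)|%N.

Definition posdef (R : numDomainType) (n : nat) (S : 'M[R]_(n.+1)) :=
  S^T = S /\ forall x : 'cV[R]_(n.+1), x != 0 -> 0 < (x^T *m S *m x) 0 0.

Definition bML (R : fieldType) (n N : nat) (lambda beta b0t : R)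
    (Sigma : 'M[R]_(n.+1)) : 'cV[R]_(n.+1) :=
  b0t^-1 *: (invmx (Sigma + invmx (((N - n)%:R * lambda) *: K_TC n beta)) *m e1 R n).

Definition bpoly (R : ringType) (n : nat) (b : 'cV[R]_(n.+1)) : {poly R} :=
  \sum_(k < n.+1) b k 0 *: 'X^(n - k).

From HB Require Import structures.
From mathcomp Require Import all_boot all_order all_algebra.
From mathcomp Require Import complex.
From mathcomp Require Import ring lra.
Import Order.TTheory GRing.Theory Num.Theory.
Set Implicit Arguments. Unset Strict Implicit. Unset Printing Implicit Defensive.
Local Open Scope ring_scope.

(* Let c = (N - n) lambda and M = Sigma + (c K_TC)^-1, so that M bML = b0t^-1 e1.
   Since K_TC = U D U^T with U the upper triangular matrix of ones and
   D = diag (beta^(k+1) (1 - beta)), the form x^T (c K_TC)^-1 x is c^-1 times a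
   sum of squared successive differences of x with weights 1/d_k increasing in k.
   Together with the shift invariance of the Toeplitz part this gives
   x^T M x <= (L x)^T M (L x) for the lag operator L whenever x_n = 0.
   For a root z, the Horner sequence h_k = b_0 z^k + ... + b_k satisfies
   h = b + z L h and h_n = 0.  As L x is M-orthogonal to b, adding the inequalities
   for Re h and Im h yields b^T M b + |z|^2 S <= S with S >= 0 and b^T M b > 0. *)

Section BilinearForm.
Variables (R : comNzRingType) (n : nat).
Implicit Types (M : 'M[R]_n.+1) (p q : nat -> R) (s : R).

Definition bform M p q := \sum_(i < n.+1) \sum_(j < n.+1) p i * M i j * q j.

Lemma eq_bform M p p' q q' : p =1 p' -> q =1 q' -> bform M p q = bform M p' q'.
Proof. by move=> pp' qq'; apply: eq_bigr => i _; apply: eq_bigr => j _; rewrite pp' qq'. Qed.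

Lemma bformDM M1 M2 p q : bform (M1 + M2) p q = bform M1 p q + bform M2 p q.
Proof.
rewrite -big_split; apply: eq_bigr => i _; rewrite -big_split; apply: eq_bigr => j _.
by rewrite mxE mulrDr mulrDl.
Qed.

Lemma bformZ M s p q : bform (s *: M) p q = s * bform M p q.
Proof.
rewrite mulr_sumr; apply: eq_bigr => i _; rewrite mulr_sumr; apply: eq_bigr => j _.
by rewrite mxE; ring.
Qed.

Lemma bformDl M p1 p2 q : bform M (p1 \+ p2) q = bform M p1 q + bform M p2 q.
Proof.
rewrite -big_split; apply: eq_bigr => i _; rewrite -big_split; apply: eq_bigr => j _.
by rewrite /= !mulrDl.
Qed.

Lemma bformDr M p q1 q2 : bform M p (q1 \+ q2) = bform M p q1 + bform M p q2.
Proof.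
rewrite -big_split; apply: eq_bigr => i _; rewrite -big_split; apply: eq_bigr => j _.
by rewrite /= mulrDr.
Qed.

Lemma bformMl M s p q : bform M (s \*o p) q = s * bform M p q.
Proof.
rewrite mulr_sumr; apply: eq_bigr => i _; rewrite mulr_sumr; apply: eq_bigr => j _.
by rewrite /= -!mulrA.
Qed.

Lemma bformMr M s p q : bform M p (s \*o q) = s * bform M p q.
Proof.
rewrite mulr_sumr; apply: eq_bigr => i _; rewrite mulr_sumr; apply: eq_bigr => j _.
by rewrite /= mulrCA mulrA.
Qed.

Lemma bformC M p q : M^T = M -> bform M p q = bform M q p.
Proof.
move=> M_sym; rewrite /bform exchange_big; apply: eq_bigr => i _; apply: eq_bigr => j _.
by rewrite -[in LHS]M_sym mxE; ring.
Qed.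

Lemma bform_mx M p q :
  bform M p q = ((\col_(i < n.+1) p i)^T *m M *m \col_(i < n.+1) q i) 0 0.
Proof.
rewrite /bform mxE exchange_big; apply: eq_bigr => j _.
by rewrite !mxE mulr_suml; apply: eq_bigr => i _; rewrite !mxE.
Qed.

End BilinearForm.

Lemma col_inord (R : Type) n (x : 'cV[R]_n.+1) : \col_(i < n.+1) x (inord i) 0 = x.
Proof. by apply/matrixP => i j; rewrite mxE inord_val (ord1 j). Qed.

Lemma bform_cV (R : comNzRingType) n (M : 'M[R]_n.+1) (x y : 'cV[R]_n.+1) :
  bform M (fun k => x (inord k) 0) (fun k => y (inord k) 0) = (x^T *m M *m y) 0 0.
Proof. by rewrite bform_mx !col_inord. Qed.

Definition lag (R : nzRingType) (f : nat -> R) (k : nat) : R :=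
  if k is k'.+1 then f k' else 0.

Lemma bform_lag_toeplitz (R : comNzRingType) n (S : 'M[R]_n.+1) f :
  toeplitz_sym S -> f n = 0 -> bform S (lag f) (lag f) = bform S f f.
Proof.
case=> r Sr fn; rewrite /bform.
rewrite [RHS]big_ord_recr /= fn [X in _ + X]big1 ?addr0; last by move=> j _; rewrite !mul0r.
rewrite [LHS]big_ord_recl /= [X in X + _]big1 ?add0r; last by move=> j _; rewrite !mul0r.
apply: eq_bigr => i _.
rewrite [RHS]big_ord_recr /= fn mulr0 addr0 [LHS]big_ord_recl /= mulr0 add0r.
by apply: eq_bigr => j _; rewrite !Sr /= /bump /= !add1n (distnDl 1 i j).
Qed.

Lemma sum_ord_delta (R : nzRingType) m t (f : nat -> R) :
  \sum_(k < m) ((k : nat) == t)%:R * f k = if (t < m)%N then f t else 0.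
Proof.
elim: m => [|m IHm]; first by rewrite big_ord0.
rewrite big_ord_recr /= IHm; case: (ltngtP t m) => [tm|mt|->].
- by rewrite ltnS ltnW // mul0r addr0.
- by rewrite ltnNge mt mul0r addr0.
- by rewrite ltnSn mul1r add0r.
Qed.

Definition tc_weight (R : nzRingType) (beta : R) (k : nat) : R :=
  beta ^+ k.+1 - beta ^+ k.+2.

Lemma sum_tc_weight_ge (R : nzRingType) (beta : R) m t :
  \sum_(k < m) (t <= k)%N%:R * tc_weight beta k =
  if (t <= m)%N then beta ^+ t.+1 - beta ^+ m.+1 else 0.
Proof.
elim: m => [|m IHm]; first by rewrite big_ord0; case: t => [|t] //=; rewrite subrr.
rewrite big_ord_recr /= IHm /tc_weight; case: (ltngtP t m) => [tm|mt|->].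
- by rewrite ltnW ?ltnS 1?ltnW // mul1r addrA subrK.
- rewrite mul0r addr0; case: ifP => // tSm.
  by rewrite (_ : t = m.+1) ?subrr //; apply/eqP; rewrite eqn_leq tSm.
- by rewrite leqnSn mul1r subrr add0r.
Qed.

Definition upper_ones (R : nzRingType) n : 'M[R]_n.+1 := \matrix_(i, j) (i <= j)%N%:R.

Definition diff_mx (R : nzRingType) n : 'M[R]_n.+1 :=
  \matrix_(i, j) (((j : nat) == i)%:R - ((j : nat) == i.+1)%:R).

Lemma diff_mx_col (R : nzRingType) n (p : nat -> R) (k : 'I_n.+1) :
  (diff_mx R n *m \col_(i < n.+1) p i) k 0 = p k - (if (k < n)%N then p k.+1 else 0).
Proof.
rewrite mxE; under eq_bigr do rewrite !mxE mulrBl.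
by rewrite sumrB !sum_ord_delta ltn_ord ltnS.
Qed.

Lemma diff_mx_upper_ones (R : nzRingType) n : diff_mx R n *m upper_ones R n = 1%:M.
Proof.
apply/matrixP => i j; rewrite !mxE; under eq_bigr do rewrite !mxE mulrBl.
rewrite sumrB (sum_ord_delta _ i (fun k => (k <= j)%N%:R)).
rewrite (sum_ord_delta _ i.+1 (fun k => (k <= j)%N%:R)) ltn_ord.
case: (ltngtP i j) => [ij|ji|/val_inj ->].
- by rewrite (leq_ltn_trans ij (ltn_ord j)) -val_eqE (ltn_eqF ij) subrr.
- by rewrite -val_eqE (gtn_eqF ji); case: ifP; rewrite subrr.
- by rewrite eqxx; case: ifP; rewrite subr0.
Qed.

Lemma K_TC_factor (R : nzRingType) n (beta : R) :
  K_TC n beta = upper_ones R n *m diag_mx (\row_k tc_weight beta k) *m (upper_ones R n)^T.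
Proof.
apply/matrixP => i j; rewrite mul_mx_diag !mxE.
have le_max k : (i <= k)%N%:R * (j <= k)%N%:R = (maxn i j <= k)%N%:R :> R.
  by rewrite geq_max; case: (i <= k)%N; rewrite ?mul1r ?mul0r.
under eq_bigr => k _ do
  rewrite !mxE -mulrA (commr_nat (tc_weight beta k)) mulrA le_max.
by rewrite sum_tc_weight_ge geq_max (ltnW (ltn_ord i)) (ltnW (ltn_ord j)).
Qed.

Definition K_TC_inv (R : fieldType) n (beta : R) : 'M[R]_n.+1 :=
  (diff_mx R n)^T *m diag_mx (\row_k (tc_weight beta k)^-1) *m diff_mx R n.

Lemma invmx_scale_K_TC (R : fieldType) n (beta c : R) :
  c != 0 -> (forall k, tc_weight beta k != 0) ->
  invmx (c *: K_TC n beta) = c^-1 *: K_TC_inv n beta.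
Proof.
move=> c_neq0 w_neq0.
have UE : upper_ones R n *m diff_mx R n = 1%:M by apply/mulmx1C/diff_mx_upper_ones.
have UEt : (upper_ones R n)^T *m (diff_mx R n)^T = 1%:M.
  by rewrite -trmx_mul diff_mx_upper_ones trmx1.
have DD : diag_mx (\row_k tc_weight beta k) *m diag_mx (\row_k (tc_weight beta k)^-1)
    = 1%:M :> 'M[R]_n.+1.
  apply/matrixP => i j; rewrite mul_mx_diag !mxE.
  by case: (i =P j) => [->|_]; rewrite ?mulr1n ?mulfV ?mulr0n ?mul0r.
have KP : c *: K_TC n beta *m (c^-1 *: K_TC_inv n beta) = 1%:M.
  rewrite -scalemxAl -scalemxAr scalerA mulfV // scale1r K_TC_factor /K_TC_inv !mulmxA.
  rewrite -[_ *m (upper_ones R n)^T *m _]mulmxA UEt mulmx1.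
  by rewrite -[_ *m diag_mx _ *m diag_mx _]mulmxA DD mulmx1 UE.
have [KU _] := mulmx1_unit KP.
by rewrite -[RHS](mulKmx KU) KP mulmx1.
Qed.

Lemma diag_qform (R : comNzRingType) n (d : 'rV[R]_n.+1) (u : 'cV[R]_n.+1) :
  (u^T *m diag_mx d *m u) 0 0 = \sum_k d 0 k * u k 0 ^+ 2.
Proof. by rewrite mxE; apply: eq_bigr => k _; rewrite mul_mx_diag !mxE; ring. Qed.

Lemma bform_K_TC_inv (R : fieldType) n (beta : R) p :
  bform (K_TC_inv n beta) p p =
  \sum_(k < n) (tc_weight beta k)^-1 * (p k - p k.+1) ^+ 2
  + (tc_weight beta n)^-1 * p n ^+ 2.
Proof.
rewrite bform_mx /K_TC_inv !mulmxA -trmx_mul -[_ *m diff_mx R n *m _]mulmxA diag_qform.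
rewrite big_ord_recr /=; congr (_ + _).
  by apply: eq_bigr => k _; rewrite diff_mx_col /= ltn_ord !mxE.
by rewrite diff_mx_col ltnn subr0 mxE.
Qed.

Lemma tc_weightS (R : comNzRingType) (beta : R) k :
  tc_weight beta k.+1 = beta * tc_weight beta k.
Proof. by rewrite /tc_weight mulrBr -!exprS. Qed.

Lemma K_TC_sym (R : nzRingType) n (beta : R) : (K_TC n beta)^T = K_TC n beta.
Proof. by apply/matrixP => i j; rewrite !mxE maxnC. Qed.

Section TCPrecision.
Variables (R : realFieldType) (n : nat) (beta : R).
Hypotheses (beta_gt0 : 0 < beta) (beta_lt1 : beta < 1).

Lemma tc_weight_gt0 k : 0 < tc_weight beta k.
Proof.
rewrite /tc_weight [_ ^+ k.+2]exprSr -{1}[_ ^+ k.+1]mulr1 -mulrBr.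
by rewrite mulr_gt0 ?exprn_gt0 ?subr_gt0.
Qed.

Lemma bform_K_TC_inv_ge0 p : 0 <= bform (K_TC_inv n beta) p p.
Proof.
rewrite bform_K_TC_inv addr_ge0 ?sumr_ge0 // => [k _|];
  by rewrite mulr_ge0 ?sqr_ge0 // invr_ge0 ltW ?tc_weight_gt0.
Qed.

Lemma bform_K_TC_inv_lag f :
  f n = 0 -> bform (K_TC_inv n beta) f f <= bform (K_TC_inv n beta) (lag f) (lag f).
Proof.
move=> fn; rewrite !bform_K_TC_inv fn expr0n mulr0 addr0.
set lagged := (X in _ <= X).
have -> : lagged = \sum_(k < n.+1) (tc_weight beta k)^-1 * (lag f k - lag f k.+1) ^+ 2.
  by rewrite big_ord_recr /= fn subr0.
rewrite big_ord_recl /=; apply: ler_wpDl.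
  by rewrite mulr_ge0 ?sqr_ge0 // invr_ge0 ltW ?tc_weight_gt0.
apply: ler_sum => k _; rewrite /bump leq0n add0n add1n.
rewrite ler_wpM2r ?sqr_ge0 // lef_pV2 ?posrE ?tc_weight_gt0 //.
by rewrite tc_weightS ger_pMl ?tc_weight_gt0 // ltW.
Qed.

End TCPrecision.

Section PosDef.
Variables (R : realFieldType) (n : nat) (M : 'M[R]_n.+1).
Hypothesis M_pd : posdef M.

Lemma posdef_bform_gt0 (p : nat -> R) : \col_(i < n.+1) p i != 0 -> 0 < bform M p p.
Proof. by move=> p_neq0; rewrite bform_mx; apply: M_pd.2. Qed.

Lemma posdef_bform_ge0 (p : nat -> R) : 0 <= bform M p p.
Proof.
have [p0|p_neq0] := eqVneq (\col_(i < n.+1) p i) 0; last exact/ltW/posdef_bform_gt0.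
by rewrite bform_mx p0 mulmx0 mxE.
Qed.

Lemma posdef_unitmx : M \in unitmx.
Proof.
rewrite unitmxE unitfE; apply/negP => /det0P [v v_neq0 vM].
have := M_pd.2 v^T; rewrite trmx_eq0 trmxK vM mul0mx mxE ltxx.
by move=> /(_ v_neq0).
Qed.

End PosDef.

Lemma bform_lag_invmx_e1 (R : fieldType) n (M : 'M[R]_n.+1) (s : R) f :
  M \in unitmx -> bform M (lag f) (fun k => (s *: (invmx M *m e1 R n)) (inord k) 0) = 0.
Proof.
move=> M_unit; rewrite bform_mx col_inord -scalemxAr -!mulmxA (mulmxA M) mulmxV //.
rewrite mul1mx !mxE big_ord_recl big1 /= => [|i _]; last by rewrite !mxE mulr0.
by rewrite !mxE mul0r addr0 mulr0.
Qed.

Section TCRegularized.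
Variables (R : realFieldType) (n : nat) (Sigma : 'M[R]_n.+1) (c beta : R).
Hypotheses (Sigma_pd : posdef Sigma) (c_gt0 : 0 < c).
Hypotheses (beta_gt0 : 0 < beta) (beta_lt1 : beta < 1).

Let invmx_cK : invmx (c *: K_TC n beta) = c^-1 *: K_TC_inv n beta.
Proof. by rewrite invmx_scale_K_TC ?gt_eqF // => k; rewrite gt_eqF ?tc_weight_gt0. Qed.

Lemma posdef_tc_reg : posdef (Sigma + invmx (c *: K_TC n beta)).
Proof.
split.
  by rewrite linearD /= Sigma_pd.1 trmx_inv linearZ /= K_TC_sym.
move=> x x_neq0; rewrite -bform_cV bformDM ltr_wpDr //.
  by rewrite invmx_cK bformZ mulr_ge0 ?bform_K_TC_inv_ge0 // invr_ge0 ltW.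
by rewrite bform_cV; apply: Sigma_pd.2.
Qed.

Lemma bform_tc_reg_lag f : toeplitz_sym Sigma -> f n = 0 ->
  bform (Sigma + invmx (c *: K_TC n beta)) f f <=
  bform (Sigma + invmx (c *: K_TC n beta)) (lag f) (lag f).
Proof.
move=> Sigma_toep fn; rewrite !bformDM bform_lag_toeplitz // lerD2l invmx_cK !bformZ.
by rewrite ler_wpM2l ?bform_K_TC_inv_lag // invr_ge0 ltW.
Qed.

End TCRegularized.

Definition horner_prefix (R : nzSemiRingType) (a : nat -> R) (z : R) (k : nat) : R :=
  \sum_(j < k.+1) a j * z ^+ (k - j).

Lemma horner_prefix_lag (R : comNzRingType) (a : nat -> R) z k :
  horner_prefix a z k = a k + z * lag (horner_prefix a z) k.
Proof.
case: k => [|k]; first by rewrite /horner_prefix big_ord1 mulr0 addr0 mulr1.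
rewrite /horner_prefix big_ord_recr /= subnn mulr1 addrC mulr_sumr; congr (_ + _).
by apply: eq_bigr => j _; rewrite subSn -1?ltnS // exprS mulrCA.
Qed.

Lemma horner_map_bpoly (R : nzRingType) (S : comNzRingType) (f : {rmorphism R -> S})
    n (b : 'cV[R]_n.+1) z :
  (map_poly f (bpoly b)).[z] = horner_prefix (fun k => f (b (inord k) 0)) z n.
Proof.
rewrite /bpoly rmorph_sum horner_sum; apply: eq_bigr => k _.
by rewrite /= map_polyZ map_polyXn hornerZ hornerXn inord_val.
Qed.

Lemma normc_lt1 (R : rcfType) (z : R[i]) :
  complex.Re z ^+ 2 + complex.Im z ^+ 2 < 1 -> `|z| < 1.
Proof.
by move=> z2_lt1; rewrite normc_def (_ : 1 = (1 : R)%:C)%C // ltcR -sqrtr1 ltr_sqrt.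
Qed.

Lemma Re_addM (R : rcfType) (r : R) (z w : R[i]) :
  complex.Re (r%:C + z * w)%C =
  r + complex.Re z * complex.Re w - complex.Im z * complex.Im w.
Proof. by case: z w => [zr zi] [wr wi] /=; ring. Qed.

Lemma Im_addM (R : rcfType) (r : R) (z w : R[i]) :
  complex.Im (r%:C + z * w)%C =
  complex.Re z * complex.Im w + complex.Im z * complex.Re w.
Proof. by case: z w => [zr zi] [wr wi] /=; ring. Qed.

Section LagStability.
Variables (R : rcfType) (n : nat) (M : 'M[R]_n.+1) (a : nat -> R).
Hypotheses (M_pd : posdef M) (a_neq0 : \col_(i < n.+1) a i != 0).
Hypothesis bform_lag : forall f, f n = 0 -> bform M f f <= bform M (lag f) (lag f).
Hypothesis bform_lag_a : forall f, bform M (lag f) a = 0.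

Lemma horner_prefix_root_lt1 (z : R[i]) :
  horner_prefix (fun k => (a k)%:C)%C z n = 0 -> `|z| < 1.
Proof.
move=> h_n; set h := horner_prefix _ z in h_n.
pose x k := complex.Re (h k); pose y k := complex.Im (h k).
have x_eq : x =1 a \+ complex.Re z \*o lag x \+ (- complex.Im z) \*o lag y.
  by move=> k; rewrite /x /y /h horner_prefix_lag Re_addM; case: k => [|k] /=; ring.
have y_eq : y =1 complex.Re z \*o lag y \+ complex.Im z \*o lag x.
  by move=> k; rewrite /x /y /h horner_prefix_lag Im_addM; case: k => [|k] /=; ring.
have M_sym := M_pd.1.
have a_lag f : bform M a (lag f) = 0 by rewrite bformC.
have [xn yn] : x n = 0 /\ y n = 0 by rewrite /x /y h_n.
have x_lag := bform_lag xn; have y_lag := bform_lag yn.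
rewrite (eq_bform M x_eq x_eq) !bformDl !bformDr !bformMl !bformMr !a_lag in x_lag.
rewrite (eq_bform M y_eq y_eq) !bformDl !bformDr !bformMl !bformMr in y_lag.
rewrite !bform_lag_a [bform M (lag y) (lag x)]bformC // in x_lag y_lag.
have := posdef_bform_gt0 M_pd a_neq0.
have := posdef_bform_ge0 M_pd (lag x); have := posdef_bform_ge0 M_pd (lag y).
move=> ly_ge0 lx_ge0 a_gt0; apply: normc_lt1; nra.
Qed.

End LagStability.

Theorem proposition2 (R : rcfType) (n N : nat) (lambda beta b0t : R)
    (Sigma : 'M[R]_(n.+1)) :
  (1 <= n)%N -> (n < N)%N ->
  0 < lambda -> 0 < beta -> beta < 1 -> b0t != 0 ->
  posdef Sigma -> toeplitz_sym Sigma ->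
  bpoly (bML N lambda beta b0t Sigma) != 0 ->
  forall z : R[i],
    root (map_poly (fun x : R => Complex x 0) (bpoly (bML N lambda beta b0t Sigma))) z ->
    `|z| < 1.
Proof.
move=> _ n_lt_N lambda_gt0 beta_gt0 beta_lt1 _ Sigma_pd Sigma_toep bML_neq0 z.
have c_gt0 : 0 < (N - n)%:R * lambda by rewrite mulr_gt0 // ltr0n subn_gt0.
have M_pd := posdef_tc_reg Sigma_pd c_gt0 beta_gt0 beta_lt1.
rewrite (eq_map_poly (g := real_complex R)) // => /rootP.
rewrite horner_map_bpoly => h_n.
pose a k := bML N lambda beta b0t Sigma (inord k) 0.
apply: (horner_prefix_root_lt1 (a := a) M_pd _ _ _ h_n).
- rewrite col_inord; apply: contraNneq bML_neq0 => ->.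
  by rewrite /bpoly big1 // => k _; rewrite mxE scale0r.
- by move=> f; apply: bform_tc_reg_lag.
- by move=> f; apply: bform_lag_invmx_e1; apply: posdef_unitmx.
Qed.
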